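(* Let $G$ be a connected graph with vertex set $\{u_1,\dots,u_m\}$, $m\ge2$, and $\kappa(G)=\delta(G)>0$, and let $n\ge3$. Let $S\subseteq V(G\times K_n)$ with $|S|=(n-1)\delta(G)$ such that $S_i\subseteq S$ for some $i\in\{1,\dots,m\}$. Then $G\times K_n-S$ is connected.
   Context: The Kronecker product $G_1\times G_2$ has vertex set $V(G_1)\times V(G_2)$, with $(u_1,v_1)(u_2,v_2)$ an edge iff $u_1u_2\in E(G_1)$ and $v_1v_2\in E(G_2)$. $K_n$ is the complete graph with $V(K_n)=\{v_1,\dots,v_n\}$, and $S_i=\{u_i\}\times V(K_n)$ for $i=1,\dots,m$. $\kappa$ denotes vertex connectivity and $\delta$ minimum degree. *)

(* Simple graphs are symmetric irreflexive relations on a finType. *)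
From mathcomp Require Import all_boot.
Set Implicit Arguments. Unset Strict Implicit. Unset Printing Implicit Defensive.

Definition induced (T : finType) (e : rel T) (A : {set T}) : rel T :=
  [rel x y | [&& x \in A, y \in A & e x y]].

Definition connected_on (T : finType) (e : rel T) (A : {set T}) : bool :=
  [forall x in A, forall y in A, connect (induced e A) x y].

Definition connected_graph (T : finType) (e : rel T) : bool :=
  connected_on e [set: T].

Definition degree (T : finType) (e : rel T) (x : T) : nat := #|[set y | e x y]|.

(* minimum degree delta(G); the seed #|T| is never below any degree *)
Definition min_degree (T : finType) (e : rel T) : nat :=
  \big[minn/#|T|]_(x : T) degree e x.

Definition separating (T : finType) (e : rel T) (S : {set T}) : bool :=
  ~~ connected_on e (~: S) || (#|~: S| <= 1).

(* vertex connectivity kappa(G): minimum size of such a set (setT always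
   qualifies, with size #|T|, so the seed is harmless) *)
Definition kappa (T : finType) (e : rel T) : nat :=
  \big[minn/#|T|]_(S : {set T} | separating e S) #|S|.

Definition complete_rel (n : nat) : rel 'I_n := fun i j => i != j.

Definition kron_Kn (T : finType) (e : rel T) (n : nat) : rel (T * 'I_n)%type :=
  fun p q => e p.1 q.1 && complete_rel p.2 q.2.

(* Call a vertex v of G thin if at most one copy (v, k) survives in
   G x K_n - S.  Since S contains a whole fibre and |S| = (n - 1) delta, fewer
   than delta = kappa(G) vertices are thin, so the thick vertices Z induce a
   connected subgraph and every vertex has at least delta - |thin| neighbours in
   Z.  A surviving copy (v, i) is adjacent to a surviving copy (w, j), j <> i,
   of every thick neighbour w; hence if the surviving copies of one thick
   vertex lie in a single component, this component spreads over Z and then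
   over all of G x K_n - S.  Otherwise all thick fibres are the same pair
   {i, j}, the copies over Z split into two disjoint sheets, each containing
   the Z-neighbourhood of some vertex, so |Z| >= 2 (delta - |thin|), and
   counting S fibrewise gives |S| >= (n - 1) delta + (n - 3)(delta - |thin|) + 1,
   a contradiction. *)

From mathcomp Require Import all_boot all_order zify.

Set Implicit Arguments.
Unset Strict Implicit.
Unset Printing Implicit Defensive.

Import Order.TTheory.

Definition nbh (T : finType) (e : rel T) (v : T) : {set T} := [set w | e v w].

Lemma min_degree_le (T : finType) (e : rel T) (v : T) :
  min_degree e <= #|nbh e v|.
Proof. exact: (@bigmin_le_cond _ nat). Qed.

Lemma kappa_le_card (T : finType) (e : rel T) (X : {set T}) :
  separating e X -> kappa e <= #|X|.
Proof. exact: (@bigmin_le_cond _ nat). Qed.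

Lemma connected_on_setC (T : finType) (e : rel T) (X : {set T}) :
  #|X| < kappa e -> connected_on e (~: X).
Proof.
move=> ltXk; have : ~~ separating e X.
  by apply: contraTN ltXk => /kappa_le_card; rewrite leqNgt.
by rewrite /separating negb_or negbK => /andP[].
Qed.

Lemma min_degree_subn_le_nbhD (T : finType) (e : rel T) (X : {set T}) (v : T) :
  min_degree e - #|X| <= #|nbh e v :\: X|.
Proof.
rewrite leq_subLR; apply: leq_trans (min_degree_le e v) _.
rewrite -(cardsID X (nbh e v)) leq_add2r.
exact/subset_leq_card/subsetIr.
Qed.

Lemma connect_propagate (T : finType) (r : rel T) (P : T -> Prop) (x y : T) :
  (forall a b, r a b -> P a -> P b) -> connect r x y -> P x -> P y.
Proof.
move=> rP /connectP[p]; elim: p x => [|z p IHp] x /=; first by move=> _ ->.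
by case/andP=> rxz pz yz Px; apply: IHp pz yz (rP _ _ rxz Px).
Qed.

Lemma connected_on_ind (T : finType) (e : rel T) (Z : {set T}) (P : T -> Prop)
    (w v : T) :
  connected_on e Z -> w \in Z -> v \in Z -> P w ->
  (forall a b, a \in Z -> b \in Z -> e a b -> P a -> P b) -> P v.
Proof.
move=> /forall_inP/(_ w) connZ wZ vZ Pw ZP.
have /forall_inP/(_ v vZ) wv := connZ wZ.
by apply: connect_propagate wv Pw => a b /and3P[]; apply: ZP.
Qed.

Definition fibre (T U : finType) (X : {set T * U}) (v : T) : {set U} :=
  [set k | (v, k) \in X].

Lemma in_fibre (T U : finType) (X : {set T * U}) (v : T) (k : U) :
  (k \in fibre X v) = ((v, k) \in X).
Proof. by rewrite inE. Qed.

Lemma card_fibreC (T U : finType) (X : {set T * U}) (v : T) :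
  #|fibre (~: X) v| + #|fibre X v| = #|U|.
Proof.
rewrite addnC -(cardsC (fibre X v)); congr (_ + _).
by apply: eq_card => k; rewrite !inE.
Qed.

Lemma card_sum_fibre (T U : finType) (X : {set T * U}) :
  #|X| = \sum_(v : T) #|fibre X v|.
Proof.
under [RHS]eq_bigr => v _ do rewrite -sum1_card big_mkcond /=.
rewrite pair_big /= -sum1_card big_mkcond /=.
by apply: eq_bigr => -[v k] _; rewrite in_fibre.
Qed.

Section KronFibres.

Variables (T : finType) (e : rel T) (n : nat) (R : {set T * 'I_n}).
Hypothesis e_sym : symmetric e.

Local Notation E := (induced (@kron_Kn T e n) R).

Definition linked_fibre (v : T) : bool :=
  [forall a in fibre R v, forall b in fibre R v, connect E (v, a) (v, b)].

Lemma connect_kron_sym : connect_sym E.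
Proof.
apply: sym_connect_sym => x y.
by rewrite /induced /kron_Kn /complete_rel /= e_sym eq_sym andbCA.
Qed.

Lemma connect_kron1 (v w : T) (i j : 'I_n) :
  i \in fibre R v -> j \in fibre R w -> e v w -> i != j ->
  connect E (v, i) (w, j).
Proof.
rewrite !in_fibre => vi wj evw ij; apply: connect1.
by rewrite /induced /kron_Kn /complete_rel /= vi wj evw.
Qed.

Lemma linked_fibre_hub (v : T) (y : T * 'I_n) :
  {in fibre R v, forall a, connect E (v, a) y} -> linked_fibre v.
Proof.
move=> vy; apply/forall_inP => a va; apply/forall_inP => b vb.
by apply: connect_trans (vy a va) _; rewrite connect_kron_sym; apply: vy.
Qed.

(* Whatever i is, the fibre over w has a point j <> i, and (v, i) ~ (w, j). *)
Lemma connect_fibre_nbh (v w : T) (y : T * 'I_n) :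
  e v w -> 1 < #|fibre R w| ->
  {in fibre R w, forall j, connect E (w, j) y} ->
  {in fibre R v, forall i, connect E (v, i) y}.
Proof.
move=> evw w2 wy i vi.
have /card_gt0P[j /setD1P[ji wj]] : 0 < #|fibre R w :\ i|.
  by move: w2; rewrite (cardsD1 i); case: (i \in _); lia.
by apply: connect_trans (wy j wj); apply: connect_kron1; rewrite // eq_sym.
Qed.

Variable Z : {set T}.
Hypothesis Z_connected : connected_on e Z.
Hypothesis Z_fibre : {in Z, forall v, 1 < #|fibre R v|}.
Hypothesis Z_nbh : forall v, exists2 w, w \in Z & e v w.

Lemma linked_fibre_connected (w : T) :
  w \in Z -> linked_fibre w -> connected_on (@kron_Kn T e n) R.
Proof.
move=> wZ /forall_inP linkw.
have /card_gt0P[k wk] : 0 < #|fibre R w| by apply: ltnW; apply: Z_fibre.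
pose P v := {in fibre R v, forall i, connect E (v, i) (w, k)}.
have ZP v : v \in Z -> P v.
  move=> vZ; apply: (connected_on_ind Z_connected wZ vZ).
    by move=> i wi; have /forall_inP := linkw i wi; apply.
  by move=> a b aZ _ eab; apply: connect_fibre_nbh; rewrite 1?e_sym ?Z_fibre.
have Rk x : x \in R -> connect E x (w, k).
  case: x => v i vi; have [u uZ evu] := Z_nbh v.
  by apply: (connect_fibre_nbh evu (Z_fibre uZ) (ZP u uZ)); rewrite in_fibre.
apply/forall_inP => x xR; apply/forall_inP => y yR.
by apply: connect_trans (Rk x xR) _; rewrite connect_kron_sym; apply: Rk.
Qed.

Hypothesis Z_unlinked : {in Z, forall v, ~~ linked_fibre v}.

Lemma unlinked_card_fibre (v : T) : v \in Z -> #|fibre R v| = 2.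
Proof.
move=> vZ; apply/eqP; rewrite eqn_leq Z_fibre // andbT leqNgt.
apply: contra (Z_unlinked vZ) => v3.
have [w wZ evw] := Z_nbh v.
have /card_gt1P[c [c' [wc wc' cc']]] := Z_fibre wZ.
have /card_gt0P[l] : 0 < #|fibre R v :\: [set c; c']|.
  rewrite cardsD subn_gt0 (leq_ltn_trans _ v3) //.
  by rewrite (leq_trans (subset_leq_card (subsetIr _ _))) // cards2 cc'.
rewrite !inE negb_or -in_fibre => /andP[/andP[lc lc'] vl].
have c'c : connect E (w, c') (w, c).
  apply: connect_trans (connect_kron1 vl wc evw lc).
  by apply: connect_kron1; rewrite 1?e_sym // eq_sym.
apply: (linked_fibre_hub (y := (w, c))) => x vx.
case: (eqVneq x c) vx => [-> | xc] vx; last exact: connect_kron1.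
by apply: connect_trans c'c; apply: connect_kron1.
Qed.

Lemma unlinked_fibre_nbh (v w : T) :
  v \in Z -> w \in Z -> e v w -> fibre R w = fibre R v.
Proof.
move=> vZ wZ evw; apply/eqP.
rewrite eqEcard !unlinked_card_fibre // leqnn andbT.
apply/subsetP => k wk; apply: contraR (Z_unlinked vZ) => vk.
apply: (linked_fibre_hub (y := (w, k))) => x vx.
by apply: connect_kron1 => //; apply: contraNneq vk => <-.
Qed.

Lemma unlinked_fibre_const (v w : T) :
  v \in Z -> w \in Z -> fibre R v = fibre R w.
Proof.
move=> vZ wZ; pose P v := fibre R v = fibre R w.
apply: (connected_on_ind (P := P) Z_connected wZ vZ) => // a b aZ bZ eab.
by rewrite /P => <-; apply: unlinked_fibre_nbh.
Qed.

Lemma unlinked_nbh_split (w : T) : w \in Z ->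
  exists v1 v2, #|nbh e v1 :&: Z| + #|nbh e v2 :&: Z| <= #|Z|.
Proof.
move=> wZ; have /eqP/cards2P[i [j [ij fw]]] := unlinked_card_fibre wZ.
have fibZ v : v \in Z -> fibre R v = [set i; j].
  by move=> vZ; rewrite -fw; apply: unlinked_fibre_const.
have Ri v : v \in Z -> i \in fibre R v by move/fibZ->; rewrite !inE eqxx.
have Rj v : v \in Z -> j \in fibre R v by move/fibZ->; rewrite !inE eqxx orbT.
pose P := [set v in Z | connect E (v, i) (w, i)].
pose Q := [set v in Z | connect E (v, j) (w, i)].
have PQ0 : [disjoint P & Q].
  apply/pred0P => v; rewrite /= !inE.
  apply/negP => /andP[/andP[vZ vi] /andP[_ vj]].
  move: (Z_unlinked vZ); rewrite (linked_fibre_hub (y := (w, i))) //.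
  by move=> x; rewrite fibZ // !inE => /orP[]/eqP->.
have NwQ : nbh e w :&: Z \subset Q.
  apply/subsetP => v; rewrite !inE => /andP[ewv vZ]; rewrite vZ.
  by apply: connect_kron1 (Rj _ vZ) (Ri _ wZ) _ _; rewrite 1?e_sym 1?eq_sym.
have [q qQ] : exists q, q \in Q.
  have [u uZ ewu] := Z_nbh w.
  by exists u; apply: (subsetP NwQ); rewrite !inE ewu.
have NqP : nbh e q :&: Z \subset P.
  move: qQ; rewrite !inE => /andP[qZ qw].
  apply/subsetP => v; rewrite !inE => /andP[eqv vZ]; rewrite vZ.
  apply: connect_trans qw.
  by apply: connect_kron1 (Ri _ vZ) (Rj _ qZ) _ _; rewrite 1?e_sym.
exists w, q; rewrite addnC.
apply: leq_trans (leq_add (subset_leq_card NqP) (subset_leq_card NwQ)) _.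
rewrite -cardsUI (disjoint_setI0 PQ0) cards0 addn0.
by apply/subset_leq_card/subsetP => v; rewrite !inE => /orP[]/andP[].
Qed.

End KronFibres.

Definition thin_fibres (T U : finType) (X : {set T * U}) : {set T} :=
  [set v | #|fibre X v| <= 1].

Lemma in_thin_fibresC (T U : finType) (X : {set T * U}) (v : T) :
  (v \in thin_fibres (~: X)) = (#|U| - 1 <= #|fibre X v|).
Proof. by rewrite inE; have := card_fibreC X v; lia. Qed.

Lemma card_fibres_lower (T U : finType) (X : {set T * U}) (u : T) :
  0 < #|U| -> #|fibre X u| = #|U| ->
  (#|U| - 1) * #|thin_fibres (~: X)| + 1 +
    \sum_(v in ~: thin_fibres (~: X)) #|fibre X v| <= #|X|.
Proof.
set Y := thin_fibres _ => U_gt0 Xu.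
have uY : u \in Y by rewrite in_thin_fibresC Xu leq_subr.
rewrite card_sum_fibre [X in _ <= X](bigID (mem Y)) /=; apply: leq_add; last first.
  by apply/eq_leq/eq_bigl => v; rewrite inE.
apply: leq_trans (_ : \sum_(v in Y) ((#|U| - 1) + (v == u)) <= _); last first.
  apply: leq_sum => v vY; case: eqVneq => [->|_]; first by rewrite Xu; lia.
  by rewrite addn0 -in_thin_fibresC.
rewrite big_split sum_nat_const /= (bigD1 u uY) /= eqxx mulnC leq_add2l.
exact: leq_addr.
Qed.

Theorem mainTheorem5 (T : finType) (e : rel T) (n : nat) (S : {set (T * 'I_n)%type}) :
  symmetric e -> irreflexive e ->
  2 <= #|T| ->
  connected_graph e ->
  kappa e = min_degree e -> 0 < min_degree e ->
  3 <= n ->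
  #|S| = (n - 1) * min_degree e ->
  (exists u : T, [set (u, j) | j : 'I_n] \subset S) ->
  connected_on (@kron_Kn T e n) (~: S).
Proof.
move=> e_sym _ _ _ kappa_d d_gt0 n3 cardS [u Su].
set d := min_degree e in kappa_d d_gt0 cardS *.
have Su_full : #|fibre S u| = #|'I_n|.
  by apply/eq_card => k; rewrite in_fibre inE; apply/(subsetP Su)/imset_f.
have In_gt0 : 0 < #|'I_n| by rewrite card_ord (leq_trans _ n3).
have := card_fibres_lower In_gt0 Su_full.
rewrite card_ord; set Y := thin_fibres _ => cardY.
have Yd : #|Y| < d by move: cardY; rewrite cardS; nia.
have Z_conn : connected_on e (~: Y) by apply: connected_on_setC; rewrite kappa_d.
have nbhZ v : d - #|Y| <= #|nbh e v :&: ~: Y|.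
  by rewrite -setDE; apply: min_degree_subn_le_nbhD.
have Z_nbh v : exists2 w, w \in ~: Y & e v w.
  have /card_gt0P[w /setIP[]] : 0 < #|nbh e v :&: ~: Y|.
    by apply: leq_trans (nbhZ v); rewrite subn_gt0.
  by rewrite inE; exists w.
have Z_fibre : {in ~: Y, forall v, 1 < #|fibre (~: S) v|}.
  by move=> v; rewrite /Y /thin_fibres !inE ltnNge.
case: (pickP [pred v in ~: Y | linked_fibre e (~: S) v]) =>
    [w /andP[wZ linked_w] | unlinked].
  exact: (linked_fibre_connected e_sym Z_conn Z_fibre Z_nbh wZ linked_w).
have {}unlinked : {in ~: Y, forall v, ~~ linked_fibre e (~: S) v}.
  by move=> v vZ; move/negbT: (unlinked v); rewrite /= vZ.
have [w wZ _] := Z_nbh u.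
have [v1 [v2 splitZ]] := unlinked_nbh_split e_sym Z_conn Z_fibre Z_nbh unlinked wZ.
have sumZ : \sum_(v in ~: Y) #|fibre S v| = #|~: Y| * (n - 2).
  rewrite -sum_nat_const; apply: eq_bigr => v vZ; have := card_fibreC S v.
  by rewrite card_ord (unlinked_card_fibre e_sym Z_fibre Z_nbh unlinked vZ); lia.
move: cardY (nbhZ v1) (nbhZ v2); rewrite sumZ cardS; nia.
Qed.
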